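(* Let $c>2$ be a constant. For all sufficiently large $n$ and all $p$ with $\frac{c\log n}{n}\le p\le 1$, we have $R(n,p)\ge 1-\frac{1.5}{n}$.
   Context: $\mathcal{G}_{n,p}$ denotes the random directed graph on $n$ vertices in which each ordered pair of distinct vertices is an edge independently with probability $p$. Fix one vertex as the target. $R(n,p)$ is the probability that every vertex of a random graph from $\mathcal{G}_{n,p}$ has a directed path to the target vertex. $\log$ is the natural logarithm. *)

From HB Require Import structures.
From mathcomp Require Import all_boot all_order all_algebra.
From mathcomp Require Import reals exp.
Set Implicit Arguments. Unset Strict Implicit. Unset Printing Implicit Defensive.
Import Order.TTheory GRing.Theory Num.Theory.
Local Open Scope ring_scope.

(* A directed graph on vertex set 'I_n is encoded by its adjacency function
   g : {ffun 'I_n * 'I_n -> bool}; (i,j) is an edge iff g (i,j). Only loopless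
   graphs (g (i,i) = false) are considered. *)
Definition loopless (n : nat) (g : {ffun 'I_n * 'I_n -> bool}) : bool :=
  [forall i : 'I_n, ~~ g (i, i)].

Definition edge_rel (n : nat) (g : {ffun 'I_n * 'I_n -> bool}) : rel 'I_n :=
  fun x y => g (x, y).

(* The target vertex is vertex 0. Every vertex has a directed path
   (possibly of length 0) to the target. *)
Definition all_reach_target (n : nat) (g : {ffun 'I_n * 'I_n -> bool}) : bool :=
  [forall v : 'I_n, exists t : 'I_n, (val t == 0%N) && connect (edge_rel g) v t].

(* Probability of the graph g under G_{n,p}: each ordered pair of distinct
   vertices is an edge independently with probability p. *)
Definition gnp_weight (R : realType) (n : nat) (p : R)
    (g : {ffun 'I_n * 'I_n -> bool}) : R :=
  \prod_(e : 'I_n * 'I_n | e.1 != e.2) (if g e then p else 1 - p).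

Definition Rnp (R : realType) (n : nat) (p : R) : R :=
  \sum_(g : {ffun 'I_n * 'I_n -> bool} | loopless g && all_reach_target g)
     gnp_weight p g.

From HB Require Import structures.
From mathcomp Require Import all_boot all_order all_algebra.
From mathcomp Require Import reals sequences exp.
From mathcomp Require Import ring lra zify.
Import Order.TTheory GRing.Theory Num.Theory.
Set Implicit Arguments. Unset Strict Implicit. Unset Printing Implicit Defensive.
Local Open Scope ring_scope.

(* If some vertex cannot reach the target, the set S of such
   vertices is nonempty, misses the target and no edge leaves it.  For a fixed
   S with |S| = k this has probability (1-p)^(k(n-k)), so by the union bound
   1 - R(n,p) <= sum_(0<k<n) C(n,k) (1-p)^(k(n-k)).  Using C(n,k) <= n^k,
   1 - p <= e^-p and the symmetry k <-> n - k, the k-th term is at most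
   A y^(k-1) with A = n^(1 - c(n-1)/n) and y = n^(-(c-2)/4).  For large n,
   y <= 1/2 and A n <= y^2 <= 1/4, so the sum is at most 6A <= 3/(2n). *)

Local Notation digraph n := {ffun 'I_n * 'I_n -> bool}.

Section GraphWeight.
Variables (R : comPzRingType) (p : R) (n : nat).
Implicit Types (g : digraph n) (S : {set 'I_n}).

(* Extends [gnp_weight] to graphs with loops, giving them weight 0, so that
   the weights of all of [digraph n] sum to 1. *)
Definition pair_weight (e : 'I_n * 'I_n) (b : bool) : R :=
  if e.1 != e.2 then (if b then p else 1 - p) else (if b then 0 else 1).

Definition graph_weight g : R := \prod_e pair_weight e (g e).

Lemma sum_pair_weight e : pair_weight e true + pair_weight e false = 1.
Proof. by rewrite /pair_weight; case: ifP => _; rewrite ?subrKC ?add0r. Qed.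

Lemma sum_graph_weight : \sum_g graph_weight g = 1.
Proof.
rewrite /graph_weight -(bigA_distr_bigA pair_weight) /=.
by apply: big1 => e _; rewrite big_bool /= sum_pair_weight.
Qed.

Definition out_closed g S : bool :=
  [forall e : 'I_n * 'I_n, (e.1 \in S) && (e.2 \notin S) ==> ~~ g e].

Lemma sum_graph_weight_out_closed S :
  \sum_(g | out_closed g S) graph_weight g = (1 - p) ^+ (#|S| * (n - #|S|)).
Proof.
pose cut e := (e.1 \in S) && (e.2 \notin S).
pose w e b := if cut e && b then 0 else pair_weight e b.
transitivity (\sum_(g : digraph n) \prod_e w e (g e)).
  rewrite big_mkcond; apply: eq_bigr => g _; rewrite /graph_weight.
  case: ifP => [/forallP gS | /negbT/forallPn[e]].
    apply: eq_bigr => e _; rewrite /w; case cut_e: (cut e) => //=.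
    by rewrite (negbTE (implyP (gS e) cut_e)).
  rewrite negb_imply negbK => /andP[cut_e ge].
  by rewrite (bigD1 e) //= /w /cut cut_e ge mul0r.
rewrite -(bigA_distr_bigA w) /= (bigID cut) /= [X in _ * X]big1 ?mulr1; last first.
  by move=> e /negbTE ncut; rewrite big_bool /w ncut /= sum_pair_weight.
rewrite (eq_bigr (fun _ => 1 - p)) ?prodr_const; last first.
  move=> e cut_e; rewrite big_bool /w cut_e /= add0r /pair_weight.
  by case/andP: cut_e => e1S e2S; case: eqP => // e12; rewrite -e12 e1S in e2S.
have -> : #|[pred e | cut e]| = #|setX S (~: S)| by apply: eq_card => e; rewrite !inE.
by rewrite cardsX (cardsCs (~: S)) setCK card_ord.
Qed.

End GraphWeight.

Lemma graph_weight_ge0 (R : numDomainType) (p : R) n (g : digraph n) :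
  0 <= p <= 1 -> 0 <= graph_weight p g.
Proof.
case/andP=> p0 p1; apply: prodr_ge0 => e _; rewrite /pair_weight.
by case: ifP => _; case: (g e); rewrite ?subr_ge0.
Qed.

Lemma sum_set_card (V : nmodType) n (P : pred nat) (F : nat -> V) :
  \sum_(S : {set 'I_n} | P #|S|) F #|S| = \sum_(k < n.+1 | P k) F k *+ 'C(n, k).
Proof.
have cardS (S : {set 'I_n}) : (#|S| < n.+1)%N.
  by rewrite ltnS; apply: leq_trans (max_card _) _; rewrite card_ord.
rewrite (partition_big (fun S : {set 'I_n} => inord #|S| : 'I_n.+1) [pred k : 'I_n.+1 | P k]) /=;
  last by move=> S PS; rewrite inordK.
apply: eq_bigr => k Pk; rewrite -[n in 'C(n, _)]card_ord -card_draws -sumr_const.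
apply: eq_big => S; last by move=> /andP[_ /eqP <-]; rewrite inordK.
rewrite inE; apply/andP/eqP => [[_ /eqP <-] | Sk]; first by rewrite inordK.
by rewrite Sk; split=> //; apply/eqP/val_inj; rewrite /= inordK // Sk.
Qed.

Section Reachability.
Variables (R : realType) (n : nat).
Implicit Types (p : R) (g : digraph n).

Lemma graph_weight_loopless p g : loopless g -> graph_weight p g = gnp_weight p g.
Proof.
move=> /forallP g_loopless.
rewrite /graph_weight /gnp_weight (bigID (fun e => e.1 != e.2)) /=.
rewrite [X in _ * X]big1 ?mulr1 => [|[x y] /= /negPn/eqP xy]; last first.
  by rewrite /pair_weight xy /= eqxx /= (negbTE (g_loopless y)).
by apply: eq_bigr => e e12; rewrite /pair_weight e12.
Qed.

Lemma graph_weight_loop p g : ~~ loopless g -> graph_weight p g = 0.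
Proof.
move=> /forallPn[i /negPn gii].
by rewrite /graph_weight (bigD1 (i, i)) //= /pair_weight /= eqxx gii mul0r.
Qed.

Lemma Rnp_graph_weight p :
  Rnp n p = \sum_(g : digraph n | all_reach_target g) graph_weight p g.
Proof.
rewrite /Rnp (bigID (fun g : digraph n => loopless g) (fun g => all_reach_target g)) /=.
rewrite [X in _ = _ + X]big1 ?addr0 => [|g /andP[_]]; last exact: graph_weight_loop.
apply: eq_big => [g|g /andP[g_loopless _]]; first by rewrite andbC.
by rewrite graph_weight_loopless.
Qed.

Lemma subr1_Rnp p :
  1 - Rnp n p = \sum_(g : digraph n | ~~ all_reach_target g) graph_weight p g.
Proof.
rewrite Rnp_graph_weight -(@sum_graph_weight _ p n).
by rewrite (bigID (fun g : digraph n => all_reach_target g)) /= addrC addrK.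
Qed.

(* Witness: the set of vertices with no path to the target. *)
Lemma not_all_reach_target_out_closed g : ~~ all_reach_target g ->
  exists S : {set 'I_n}, [&& 0 < #|S|, #|S| < n & out_closed g S]%N.
Proof.
move=> /forallPn[v /existsPn v_stuck].
pose S := [set x | ~~ [exists t : 'I_n, (val t == 0%N) && connect (edge_rel g) x t]].
have n_gt0 : (0 < n)%N by apply: leq_ltn_trans (ltn_ord v).
exists S; apply/and3P; split.
- by apply/card_gt0P; exists v; rewrite inE; apply/existsPn.
- rewrite -[X in (_ < X)%N](card_ord n) -cardsT; apply: proper_card.
  rewrite properT; apply/eqP => S_full.
  have : Ordinal n_gt0 \in S by rewrite S_full inE.
  by rewrite inE => /existsPn /(_ (Ordinal n_gt0)); rewrite connect0.
- apply/forallP => -[x y] /=; apply/implyP => /andP[xS yS]; apply/negP => gxy.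
  move: yS; rewrite inE negbK => /existsP[t /andP[t0 yt]].
  move: xS; rewrite inE => /existsPn /(_ t); rewrite t0 /=.
  by rewrite (connect_trans (connect1 (gxy : edge_rel g x y)) yt).
Qed.

Lemma subr1_Rnp_le p : 0 <= p <= 1 ->
  1 - Rnp n p <= \sum_(S : {set 'I_n} | (0 < #|S| < n)%N) (1 - p) ^+ (#|S| * (n - #|S|)).
Proof.
move=> p01; rewrite subr1_Rnp.
under [X in _ <= X]eq_bigr do rewrite -sum_graph_weight_out_closed big_mkcond.
rewrite exchange_big big_mkcond /=; apply: ler_sum => g _.
have weight_ge0 S : 0 <= (if out_closed g S then graph_weight p g else 0).
  by case: ifP => // _; exact: graph_weight_ge0.
case: ifP => [g_bad | _]; last exact: sumr_ge0.
have [S /and3P[S_gt0 S_lt S_closed]] := not_all_reach_target_out_closed g_bad.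
rewrite (bigD1 S) /= ?S_gt0 // S_closed lerDl; exact: sumr_ge0.
Qed.

End Reachability.

Lemma bin_leq_expn n k : ('C(n, k) <= n ^ k)%N.
Proof.
apply: leq_trans (_ : n ^_ k <= n ^ k)%N; first by rewrite -bin_ffact leq_pmulr ?fact_gt0.
elim: k => // k IHk; rewrite ffactnSr expnS mulnC leq_mul //; exact: leq_subr.
Qed.

Lemma sum_expr_le2 (R : realFieldType) (y : R) m :
  0 <= y -> y * 2 <= 1 -> \sum_(i < m) y ^+ i <= 2.
Proof.
move=> y0 y_half; elim: m => [|m IHm]; first by rewrite big_ord0.
rewrite big_ord_recl expr0; under eq_bigr do rewrite exprS; rewrite -mulr_sumr.
have : y * \sum_(i < m) y ^+ i <= y * 2 by apply: ler_wpM2l.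
lra.
Qed.

Definition cut_scale (R : realType) (c : R) n : R :=
  expR (ln n%:R * (1 - c * (n%:R - 1) / n%:R)).
Definition cut_ratio (R : realType) (c : R) n : R := expR (- ((c - 2) / 4 * ln n%:R)).

Section CutSum.
Variables (R : realType) (c p : R) (n : nat).
Hypotheses (c_gt2 : 2 < c) (n_large : 4 * c <= n%:R * (c - 2)).
Hypothesis ln_n_large : 4 / (c - 2) <= ln n%:R.
Hypotheses (p_ge : c * ln n%:R / n%:R <= p) (p_le1 : p <= 1).

Let lnn := ln (n%:R : R).
Local Notation A := (cut_scale c n).
Local Notation y := (cut_ratio c n).

Let n_gt0 : (0 < n)%N.
Proof.
rewrite lt0n; apply/eqP => n0; move: n_large.
by rewrite n0 mulr0n mul0r; have := c_gt2; lra.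
Qed.

Let lnn_ge0 : 0 <= lnn.
Proof. by rewrite /lnn ln_ge0 // ler1n. Qed.

Let p_ge0 : 0 <= p.
Proof. by apply: le_trans p_ge; rewrite divr_ge0 ?mulr_ge0 //; have := c_gt2; lra. Qed.

Lemma cut_term_le_half m : (0 < m)%N -> (2 * m <= n)%N ->
  (1 - p) ^+ (m * (n - m)) *+ 'C(n, m) <= A * y ^+ m.-1.
Proof.
move=> m_gt0 m_half.
have bin_le : 'C(n, m)%:R <= expR (m%:R * lnn).
  by rewrite expRM_natl lnK ?posrE ?ltr0n // -natrX ler_nat bin_leq_expn.
have cut_le : (1 - p) ^+ (m * (n - m)) <= expR ((m * (n - m))%:R * - (c * lnn / n%:R)).
  rewrite expRM_natl; apply: le_trans (_ : expR (- p) ^+ _ <= _).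
    apply: lerXn2r; rewrite ?nnegrE ?expR_ge0 ?subr_ge0 //.
    by have := expR_ge1Dx (- p); lra.
  by apply: lerXn2r; rewrite ?nnegrE ?expR_ge0 // ler_expR lerN2.
rewrite -mulr_natl; apply: le_trans (ler_pM _ _ bin_le cut_le) _ => //.
  by rewrite exprn_ge0 // subr_ge0.
rewrite /cut_scale /cut_ratio -expRM_natl -!expRD ler_expR natrM natrB; last lia.
have -> : (m.-1)%:R = m%:R - 1 :> R by rewrite -[in RHS](prednK m_gt0) -natr1 addrK.
have m_ge1 : 1 <= (m%:R : R) by rewrite ler1n.
have m_half' : 2 * (m%:R : R) <= n%:R by rewrite -natrM ler_nat.
rewrite -subr_ge0; set x := (m%:R : R); set N := (n%:R : R).
(* The difference factors as a sum of two nonnegative terms, one for each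
   of the hypotheses [4 c <= n (c - 2)] and [2 m <= n]. *)
have -> : lnn * (1 - c * (N - 1) / N) + (x - 1) * - ((c - 2) / 4 * lnn)
          - (x * lnn + x * (N - x) * - (c * lnn / N))
        = lnn * ((x - 1) * (N * (c - 2) / 4 - c) + (x - 1) * (c / 2) * (N - 2 * x)) / N.
  by field; rewrite /N pnatr_eq0 -lt0n.
rewrite divr_ge0 ?ler0n // mulr_ge0 // addr_ge0 // !mulr_ge0 //.
all: by move: c_gt2 n_large; rewrite -/N; lra.
Qed.

Lemma cut_term_le k : (0 < k < n)%N ->
  (1 - p) ^+ (k * (n - k)) *+ 'C(n, k) <= A * (y ^+ k.-1 + y ^+ (n.-1 - k)).
Proof.
case/andP=> k_gt0 k_lt; have y_ge0 j : 0 <= y ^+ j by rewrite exprn_ge0 ?expR_ge0.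
have A_ge0 : 0 <= A := expR_ge0 _.
have [k_half | k_half] := leqP (2 * k) n.
  by apply: le_trans (cut_term_le_half k_gt0 k_half) _; rewrite ler_wpM2l ?lerDl.
rewrite -(bin_sub (ltnW k_lt)) -[k in (k * _)%N](subKn (ltnW k_lt)) mulnC.
have -> : (n.-1 - k = (n - k).-1)%N by lia.
apply: le_trans (cut_term_le_half _ _) _; rewrite ?subn_gt0 //; first lia.
by rewrite ler_wpM2l ?lerDr.
Qed.

Lemma cut_scale_mul_n_le : A * n%:R <= y ^+ 2.
Proof.
rewrite /cut_scale /cut_ratio -[X in _ * X](@lnK _ n%:R) ?posrE ?ltr0n //.
rewrite -expRD -expRM_natl ler_expR.
rewrite -subr_ge0 (_ : _ - _ = lnn * (n%:R * (c - 2) - 2 * c) / (2 * n%:R)).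
  by rewrite divr_ge0 ?mulr_ge0 ?ler0n //; move: c_gt2 n_large; lra.
by rewrite /lnn; field; rewrite pnatr_eq0 -lt0n.
Qed.

(* [y <= e ^ -1 <= 1 / 2] *)
Lemma cut_ratio_le_half : y * 2 <= 1.
Proof.
have e_ge2 : 2 <= expR 1 :> R by have := expR_ge1Dx (1 : R); lra.
apply: le_trans (_ : y * expR 1 <= _); first by rewrite ler_wpM2l ?expR_ge0.
have : 1 <= (c - 2) / 4 * lnn.
  apply: le_trans (ler_wpM2l _ ln_n_large); last by rewrite divr_ge0 //; move: c_gt2; lra.
  by rewrite (_ : _ * _ = 1) //; field; move: c_gt2; lra.
by rewrite /cut_ratio -/lnn -expRD -(expR0 R) ler_expR; lra.
Qed.

Lemma sum_cut_term_le :
  \sum_(k < n.+1 | (0 < k < n)%N) (1 - p) ^+ (k * (n - k)) *+ 'C(n, k) <= A * 6.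
Proof.
have y_ge0 : 0 <= y := expR_ge0 _.
apply: le_trans (_ : \sum_(k < n.+1) A * (y ^+ k.-1 + y ^+ (n.-1 - k)) <= _).
  rewrite big_mkcond /=; apply: ler_sum => k _; case: ifP => [k_cut | _].
    exact: cut_term_le.
  by rewrite mulr_ge0 ?expR_ge0 ?addr_ge0 ?exprn_ge0.
rewrite -mulr_sumr big_split /= ler_wpM2l ?expR_ge0 //.
have -> : \sum_(k < n.+1) y ^+ (n.-1 - k) = \sum_(k < n.+1) y ^+ k.-1.
  rewrite (reindex_inj rev_ord_inj); apply: eq_bigr => k _ /=.
  by rewrite subSS; congr (_ ^+ _); have := ltn_ord k; lia.
rewrite big_ord_recl /= expr0.
have := sum_expr_le2 n y_ge0 cut_ratio_le_half; lra.
Qed.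

Lemma subr1_Rnp_le_cut_scale : 1 - Rnp n p <= A * 6.
Proof.
apply: le_trans sum_cut_term_le.
rewrite -(@sum_set_card _ n (fun k => 0 < k < n)%N (fun k => (1 - p) ^+ (k * (n - k)))).
by apply: subr1_Rnp_le; rewrite p_ge0 p_le1.
Qed.

Lemma subr1_Rnp_le_inv_n : 1 - Rnp n p <= 3 / 2 / n%:R.
Proof.
apply: le_trans subr1_Rnp_le_cut_scale _.
rewrite ler_pdivlMr ?ltr0n // mulrAC.
have y_ge0 : 0 <= y := expR_ge0 _.
have : y ^+ 2 <= 1 / 4 by have := cut_ratio_le_half; rewrite expr2; nra.
have := cut_scale_mul_n_le; lra.
Qed.

End CutSum.

Theorem lemma22 (R : realType) (c : R) (hc : 2 < c) :
  exists N : nat, forall n : nat, (N <= n)%N ->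
    forall p : R, c * ln (n%:R) / n%:R <= p -> p <= 1 ->
      1 - (3 / 2) / n%:R <= Rnp n p.
Proof.
have c2_gt0 : 0 < c - 2 by lra.
have exp_ge0 := expR_ge0 (4 / (c - 2)).
have frac_gt0 : 0 < 4 * c / (c - 2) by rewrite divr_gt0 //; lra.
pose B := expR (4 / (c - 2)) + 4 * c / (c - 2).
have B_ge0 : 0 <= B by rewrite /B; lra.
exists (Num.bound B) => n n_ge p p_ge p_le1.
have B_lt_n : B < n%:R by apply: lt_le_trans (archi_boundP B_ge0) _; rewrite ler_nat.
rewrite /B in B_lt_n.
have n_gt0 : 0 < n%:R :> R by lra.
have n_large : 4 * c <= n%:R * (c - 2) by rewrite -ler_pdivrMr //; lra.
have ln_n_large : 4 / (c - 2) <= ln n%:R.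
  by rewrite -[X in X <= _]expRK ler_ln ?posrE ?expR_gt0 //; lra.
have := subr1_Rnp_le_inv_n hc n_large ln_n_large p_ge p_le1; lra.
Qed.
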